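(* The equation $X^2+iY^2=(1+i)Z^2$ has a solution $(X,Y,Z)\in\mathbb{Z}[i]^3$ with $X,Y,Z\in O^I$, $\gcd(X,Y)\in U$ and $XYZ\neq0$ if and only if the system $$x-y=u+v,\qquad xy=iuv$$ has a solution $(x,y,u,v)\in\mathbb{Z}[i]^4$ with $x+y,\ u+v,\ u-v\in O^I$, $uv\equiv 0\pmod{1+i}$, $\gcd(x,y)\in U$ and $\gcd(u,v)\in U$.
   Context: $\mathbb{Z}[i]$ is the ring of Gaussian integers, $U=\{1,-1,i,-i\}$ its unit group; $R(\alpha),I(\alpha)$ are real and imaginary parts. $\gcd(x,y)\in U$ means no common non-unit divisor. $O=\{\alpha: R(\alpha)+I(\alpha)\equiv1\pmod 2\}$, $O^I=\{\alpha\in O: R(\alpha)\equiv 1\pmod 4\}$. *)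

From Stdlib Require Import ZArith.
Open Scope Z_scope.

Record gauss : Type := Gauss { re : Z; im : Z }.

Definition gadd (a b : gauss) : gauss := Gauss (re a + re b) (im a + im b).
Definition gopp (a : gauss) : gauss := Gauss (- re a) (- im a).
Definition gsub (a b : gauss) : gauss := gadd a (gopp b).
Definition gmul (a b : gauss) : gauss :=
  Gauss (re a * re b - im a * im b) (re a * im b + im a * re b).

Definition g0 : gauss := Gauss 0 0.
Definition g1 : gauss := Gauss 1 0.
Definition gi : gauss := Gauss 0 1.
Definition g1pi : gauss := Gauss 1 1.

Definition gdvd (d a : gauss) : Prop := exists q : gauss, a = gmul d q.

Definition gunit (u : gauss) : Prop :=
  u = Gauss 1 0 \/ u = Gauss (-1) 0 \/ u = Gauss 0 1 \/ u = Gauss 0 (-1).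

Definition gcd_unit (x y : gauss) : Prop :=
  forall d : gauss, gdvd d x -> gdvd d y -> gunit d.

Definition inO (a : gauss) : Prop := (re a + im a) mod 2 = 1.
Definition inOI (a : gauss) : Prop := inO a /\ re a mod 4 = 1.

(* With X = x + y, Y = u - v and Z = x - y = u + v one has
   X^2 + iY^2 - (1 + i)Z^2 = 4(xy - iuv), so the equation and the system are the
   same condition; the halving is possible because X, Y, Z lie in O^I, and 1 + i
   divides uv because u + v is odd.  Coprimality is transported with Bezout
   identities (Z[i] is Euclidean): a common divisor of x and y divides X and Z,
   hence Y^2; one of u and v divides Y and Z, hence X^2; and a common divisor of
   X and Y divides 4(1 + i) and the odd X, hence 1. *)
From Stdlib Require Import ZArith Lia Ring Wf_nat.
Open Scope Z_scope.

Ltac zdiv := Z.div_mod_to_equations; lia.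

Lemma gauss_ring : ring_theory g0 g1 gadd gmul gsub gopp (@eq gauss).
Proof.
  constructor; intros;
  repeat match goal with a : gauss |- _ => destruct a as [?a1 ?a2] end;
  unfold gsub, gadd, gmul, gopp, g0, g1; cbn [re im]; f_equal; ring.
Qed.
Add Ring gauss_ring : gauss_ring.

Lemma gauss_eq a b : re a = re b -> im a = im b -> a = b.
Proof. destruct a as [a1 a2], b as [b1 b2]; cbn [re im]; intros -> ->; reflexivity. Qed.

Definition g2 : gauss := gadd g1 g1.

Lemma g2_mul_inj a b : gmul g2 a = gmul g2 b -> a = b.
Proof.
  destruct a as [a1 a2], b as [b1 b2]; unfold g2, g1, gadd, gmul; intros H.
  apply (f_equal re) in H as Hre; apply (f_equal im) in H as Him; cbn [re im] in *.
  apply gauss_eq; cbn [re im]; lia.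
Qed.

Lemma g1pi_eq : g1pi = gadd g1 gi.
Proof. reflexivity. Qed.

Lemma gdvd_refl a : gdvd a a.
Proof. exists g1; ring. Qed.

Lemma gdvd_add d a b : gdvd d a -> gdvd d b -> gdvd d (gadd a b).
Proof. intros [p ->] [q ->]; exists (gadd p q); ring. Qed.

Lemma gdvd_sub d a b : gdvd d a -> gdvd d b -> gdvd d (gsub a b).
Proof. intros [p ->] [q ->]; exists (gsub p q); ring. Qed.

Lemma gdvd_mulr d a c : gdvd d a -> gdvd d (gmul a c).
Proof. intros [p ->]; exists (gmul p c); ring. Qed.

Lemma gdvd_mull d a c : gdvd d a -> gdvd d (gmul c a).
Proof. intros [p ->]; exists (gmul c p); ring. Qed.

Definition gnorm (a : gauss) : Z := re a * re a + im a * im a.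

Lemma gnorm_ge0 a : 0 <= gnorm a.
Proof. unfold gnorm; nia. Qed.

Lemma gnorm_mul a b : gnorm (gmul a b) = gnorm a * gnorm b.
Proof. destruct a as [a1 a2], b as [b1 b2]; unfold gnorm, gmul; cbn [re im]; ring. Qed.

Lemma gnorm_eq0 a : gnorm a = 0 -> a = g0.
Proof. destruct a as [a1 a2]; unfold gnorm, g0; cbn [re im]; intros; apply gauss_eq; cbn [re im]; nia. Qed.

Lemma gunit_gnorm1 d : gnorm d = 1 -> gunit d.
Proof.
  destruct d as [d1 d2]; unfold gnorm, gunit; cbn [re im]; intros Hn.
  assert (d1 = -1 \/ d1 = 0 \/ d1 = 1) as [-> | [-> | ->]] by nia;
  assert (d2 = -1 \/ d2 = 0 \/ d2 = 1) as [-> | [-> | ->]] by nia;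
  cbn in Hn; try discriminate Hn; tauto.
Qed.

Lemma gunit_dvd1 d : gdvd d g1 -> gunit d.
Proof.
  intros [q Hq]; apply gunit_gnorm1.
  assert (Hn : gnorm d * gnorm q = 1) by (rewrite <- gnorm_mul, <- Hq; reflexivity).
  exact (proj1 (Z.eq_mul_1_nonneg _ _ (gnorm_ge0 d) Hn)).
Qed.

Lemma gunit_inv u : gunit u -> exists c, gmul c u = g1.
Proof.
  intros [-> | [-> | [-> | ->]]];
  [exists (Gauss 1 0) | exists (Gauss (-1) 0) | exists (Gauss 0 (-1)) | exists (Gauss 0 1)];
  reflexivity.
Qed.

Lemma Z_round_div e n : 0 < n -> exists q, - n <= 2 * (e - q * n) <= n.
Proof. intros Hn; exists ((2 * e + n) / (2 * n)); zdiv. Qed.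

(* The quotient rounds both coordinates of a conj(b) / N(b); since
   N(r) N(b) = N(a conj(b) - q N(b)), this gives N(r) N(b) <= N(b)^2 / 2. *)
Lemma gauss_div_mod a b : 0 < gnorm b ->
  exists q r, a = gadd (gmul b q) r /\ gnorm r < gnorm b.
Proof.
  destruct a as [a1 a2], b as [b1 b2]; unfold gnorm; cbn [re im]; intros Hn.
  set (n := b1 * b1 + b2 * b2) in *.
  destruct (Z_round_div (a1 * b1 + a2 * b2) n Hn) as [q1 Hq1].
  destruct (Z_round_div (a2 * b1 - a1 * b2) n Hn) as [q2 Hq2].
  exists (Gauss q1 q2), (gsub (Gauss a1 a2) (gmul (Gauss b1 b2) (Gauss q1 q2))).
  split; [ring | unfold gsub, gadd, gopp, gmul; cbn [re im]].
  set (e1 := a1 * b1 + a2 * b2 - q1 * n) in *.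
  set (e2 := a2 * b1 - a1 * b2 - q2 * n) in *.
  set (r1 := a1 + - (b1 * q1 - b2 * q2)); set (r2 := a2 + - (b1 * q2 + b2 * q1)).
  assert (Hr : (r1 * r1 + r2 * r2) * n = e1 * e1 + e2 * e2)
    by (unfold r1, r2, e1, e2, n; ring).
  clearbody r1 r2 e1 e2 n.
  assert (0 <= (n + 2 * e1) * (n - 2 * e1)) by (apply Z.mul_nonneg_nonneg; lia).
  assert (0 <= (n + 2 * e2) * (n - 2 * e2)) by (apply Z.mul_nonneg_nonneg; lia).
  assert (2 * ((r1 * r1 + r2 * r2) * n) <= n * n) by nia.
  enough (2 * (r1 * r1 + r2 * r2) <= n) by lia.
  apply (Z.mul_le_mono_pos_r _ _ n Hn); lia.
Qed.

Lemma gauss_bezout a b :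
  exists g s t, gdvd g a /\ gdvd g b /\ g = gadd (gmul s a) (gmul t b).
Proof.
  remember (Z.to_nat (gnorm b)) as k eqn:Hk; revert a b Hk.
  induction k as [k IH] using lt_wf_ind; intros a b Hk.
  destruct (Z.eq_dec (gnorm b) 0) as [Hb | Hb].
  - apply gnorm_eq0 in Hb; subst b.
    exists a, g1, g0; split; [apply gdvd_refl | split; [exists g0 |]]; ring.
  - pose proof (gnorm_ge0 b).
    destruct (gauss_div_mod a b ltac:(lia)) as (q & r & Ha & Hr).
    pose proof (gnorm_ge0 r).
    destruct (IH (Z.to_nat (gnorm r)) ltac:(lia) b r eq_refl)
      as (g & s & t & [pb Hpb] & [pr Hpr] & Hg).
    exists g, t, (gsub s (gmul t q)); split; [| split].
    + exists (gadd (gmul pb q) pr); rewrite Ha, Hpb, Hpr; ring.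
    + exists pb; exact Hpb.
    + rewrite Hg, Ha; ring.
Qed.

Lemma gcd_unit_bezout a b : gcd_unit a b ->
  exists s t, gadd (gmul s a) (gmul t b) = g1.
Proof.
  intros Hab; destruct (gauss_bezout a b) as (g & s & t & Ha & Hb & Hg).
  destruct (gunit_inv g (Hab g Ha Hb)) as [c Hc].
  exists (gmul c s), (gmul c t); rewrite <- Hc, Hg; ring.
Qed.

Lemma gcd_unit_sym a b : gcd_unit a b -> gcd_unit b a.
Proof. intros H d Hb Ha; exact (H d Ha Hb). Qed.

Lemma gcd_unit_sum_diff a b : gcd_unit (gadd a b) (gsub a b) -> gcd_unit a b.
Proof. intros H d Ha Hb; apply H; [apply gdvd_add | apply gdvd_sub]; assumption. Qed.

Lemma gcd_unit_dvd_sqr a b d : gcd_unit a b -> gdvd d a -> gdvd d (gmul b b) -> gunit d.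
Proof.
  intros Hab Ha Hb2; destruct (gcd_unit_bezout a b Hab) as (s & t & Hst).
  apply gunit_dvd1.
  replace g1 with (gadd (gmul a (gadd (gmul (gmul s s) a) (gmul (gmul g2 s) (gmul t b))))
                        (gmul (gmul t t) (gmul b b)))
    by (transitivity (gmul (gadd (gmul s a) (gmul t b)) (gadd (gmul s a) (gmul t b)));
        [unfold g2; ring | rewrite Hst; ring]).
  apply gdvd_add; [apply gdvd_mulr | apply gdvd_mull]; assumption.
Qed.

(* From s x + t y = 1: 2 = (s + t)(x + y) + (s - t)(x - y); square it. *)
Lemma gcd_unit_dvd_sum_diff x y c d : gcd_unit x y ->
  gdvd d (gadd x y) -> gdvd d (gmul c (gmul (gsub x y) (gsub x y))) ->
  gdvd d (gmul (gmul g2 g2) c).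
Proof.
  intros Hxy Hp Hm; destruct (gcd_unit_bezout x y Hxy) as (s & t & Hst).
  set (p := gadd s t); set (m := gsub s t).
  replace (gmul (gmul g2 g2) c)
    with (gadd (gmul (gadd x y) (gmul c (gadd (gmul (gmul p p) (gadd x y))
                                             (gmul (gmul g2 (gmul p m)) (gsub x y)))))
               (gmul (gmul m m) (gmul c (gmul (gsub x y) (gsub x y)))))
    by (transitivity (gmul c (gmul (gmul g2 (gadd (gmul s x) (gmul t y)))
                                   (gmul g2 (gadd (gmul s x) (gmul t y)))));
        [unfold p, m, g2; ring | rewrite Hst; ring]).
  apply gdvd_add; [apply gdvd_mulr | apply gdvd_mull]; assumption.
Qed.

Lemma inO_mul a b : inO a -> inO b -> inO (gmul a b).
Proof.
  destruct a as [a1 a2], b as [b1 b2]; unfold inO, gmul; cbn [re im]; intros Ha Hb.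
  assert (exists k, a1 = 2 * k + 1 - a2) as [k ->] by (exists ((a1 + a2) / 2); zdiv).
  assert (exists l, b1 = 2 * l + 1 - b2) as [l ->] by (exists ((b1 + b2) / 2); zdiv).
  match goal with |- ?e mod 2 = 1 =>
    replace e with (1 + (2 * k * l + k + l - a2 * b2) * 2) by ring end.
  rewrite Z.mod_add by lia; reflexivity.
Qed.

Lemma inO_neq0 a : inO a -> a <> g0.
Proof. intros H ->; discriminate H. Qed.

Lemma gdvd_g1pi_even w : (re w + im w) mod 2 = 0 -> gdvd g1pi w.
Proof.
  destruct w as [w1 w2]; cbn [re im]; intros Hw.
  exists (Gauss ((w1 + w2) / 2) ((w1 + w2) / 2 - w1)).
  apply gauss_eq; unfold gmul, g1pi; cbn [re im]; zdiv.
Qed.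

Lemma inO_add_gdvd_mul u v : inO (gadd u v) -> gdvd g1pi (gmul u v).
Proof.
  unfold inO, gadd; cbn [re im]; intros Huv.
  destruct (Z.eq_dec ((re u + im u) mod 2) 0) as [Hu | Hu].
  - apply gdvd_mulr, gdvd_g1pi_even, Hu.
  - apply gdvd_mull, gdvd_g1pi_even; zdiv.
Qed.

Lemma Z_odd_square m : exists k, (2 * m + 1) * (2 * m + 1) = 8 * k + 1.
Proof.
  destruct (Z.Even_or_Odd m) as [[p ->] | [p ->]];
  [exists (p * (2 * p + 1)) | exists ((2 * p + 1) * (p + 1))]; ring.
Qed.

Lemma gnorm_inO a : inO a -> exists m, gnorm a = 2 * m + 1.
Proof.
  destruct a as [a1 a2]; unfold inO, gnorm; cbn [re im]; intros Ha.
  assert (exists j, a1 = 2 * j + 1 - a2) as [j ->] by (exists ((a1 + a2) / 2); zdiv).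
  exists (2 * j * j + 2 * j - (2 * j + 1) * a2 + a2 * a2); ring.
Qed.

(* With N(a)^2 = 8k + 1: 1 = a conj(a) N(a) - 4 (1 + i) (1 - i) k. *)
Lemma inO_gdvd_4g1pi a d : inO a -> gdvd d a -> gdvd d (gmul (gmul g2 g2) g1pi) -> gunit d.
Proof.
  intros Ha Hda Hd8; apply gunit_dvd1.
  destruct (gnorm_inO a Ha) as [m Hm]; destruct (Z_odd_square m) as [k Hk].
  rewrite <- Hm in Hk.
  replace g1 with (gadd (gmul a (gmul (Gauss (re a) (- im a)) (Gauss (gnorm a) 0)))
                        (gmul (gmul (gmul g2 g2) g1pi) (Gauss (- k) k))).
  - apply gdvd_add; apply gdvd_mulr; assumption.
  - destruct a as [a1 a2]; unfold gnorm in *; cbn [re im] in *.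
    apply gauss_eq; unfold g2, g1, g1pi, gadd, gmul; cbn [re im]; lia.
Qed.

Lemma inOI_halves a b : inOI a -> inOI b -> exists x y, gadd x y = a /\ gsub x y = b.
Proof.
  destruct a as [a1 a2], b as [b1 b2]; unfold inOI, inO; cbn [re im]; intros [Ha1 Ha2] [Hb1 Hb2].
  exists (Gauss ((a1 + b1) / 2) ((a2 + b2) / 2)), (Gauss ((a1 - b1) / 2) ((a2 - b2) / 2)).
  split; apply gauss_eq; unfold gsub, gadd, gopp; cbn [re im]; zdiv.
Qed.

Definition on_curve (X Y Z : gauss) : Prop :=
  gadd (gmul X X) (gmul gi (gmul Y Y)) = gmul g1pi (gmul Z Z).

Lemma gsub_eq0 a b : gsub a b = g0 -> a = b.
Proof. intros H; transitivity (gadd (gsub a b) b); [ring | rewrite H; ring]. Qed.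

Lemma on_curve_iff x y u v : gsub x y = gadd u v ->
  on_curve (gadd x y) (gsub u v) (gadd u v) <-> gmul x y = gmul gi (gmul u v).
Proof.
  unfold on_curve; intros Hz.
  replace (gmul g1pi (gmul (gadd u v) (gadd u v)))
    with (gadd (gmul (gsub x y) (gsub x y)) (gmul gi (gmul (gadd u v) (gadd u v))))
    by (rewrite Hz, g1pi_eq; ring).
  set (lhs := gadd (gmul (gadd x y) (gadd x y)) (gmul gi (gmul (gsub u v) (gsub u v)))).
  set (rhs := gadd (gmul (gsub x y) (gsub x y)) (gmul gi (gmul (gadd u v) (gadd u v)))).
  assert (E : gsub lhs rhs = gmul g2 (gmul g2 (gsub (gmul x y) (gmul gi (gmul u v)))))
    by (unfold lhs, rhs, g2; ring).
  split; intros H.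
  - apply gsub_eq0, g2_mul_inj, g2_mul_inj.
    rewrite <- E, H; ring.
  - apply gsub_eq0; rewrite E, H; ring.
Qed.

Lemma on_curve_gcd_XZ X Y Z : on_curve X Y Z -> gcd_unit X Y -> gcd_unit X Z.
Proof.
  intros HC HXY d HX HZ; apply (gcd_unit_dvd_sqr X Y d HXY HX).
  replace (gmul Y Y) with (gmul (gopp gi) (gsub (gmul g1pi (gmul Z Z)) (gmul X X))).
  - apply gdvd_mull, gdvd_sub; [apply gdvd_mull, gdvd_mulr | apply gdvd_mulr]; assumption.
  - rewrite <- HC; transitivity (gmul (gmul (gopp gi) gi) (gmul Y Y)); [ring |].
    change (gmul (gopp gi) gi) with g1; ring.
Qed.

Lemma on_curve_gcd_ZY X Y Z : on_curve X Y Z -> gcd_unit X Y -> gcd_unit Z Y.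
Proof.
  intros HC HXY d HZ HY; apply (gcd_unit_dvd_sqr Y X d (gcd_unit_sym X Y HXY) HY).
  replace (gmul X X) with (gsub (gmul g1pi (gmul Z Z)) (gmul gi (gmul Y Y)))
    by (rewrite <- HC; ring).
  apply gdvd_sub; apply gdvd_mull, gdvd_mulr; assumption.
Qed.

Lemma on_curve_gcd_XY x y Y : on_curve (gadd x y) Y (gsub x y) ->
  inO (gadd x y) -> gcd_unit x y -> gcd_unit (gadd x y) Y.
Proof.
  intros HC HO Hxy d HX HY; apply (inO_gdvd_4g1pi _ d HO HX).
  apply (gcd_unit_dvd_sum_diff x y g1pi d Hxy HX).
  rewrite <- HC; apply gdvd_add; [apply gdvd_mulr | apply gdvd_mull, gdvd_mulr]; assumption.
Qed.

Theorem proposition4p20 :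
  (exists X Y Z : gauss,
      gadd (gmul X X) (gmul gi (gmul Y Y)) = gmul g1pi (gmul Z Z) /\
      inOI X /\ inOI Y /\ inOI Z /\
      gcd_unit X Y /\
      gmul X (gmul Y Z) <> g0)
  <->
  (exists x y u v : gauss,
      gsub x y = gadd u v /\
      gmul x y = gmul gi (gmul u v) /\
      inOI (gadd x y) /\ inOI (gadd u v) /\ inOI (gsub u v) /\
      gdvd g1pi (gmul u v) /\
      gcd_unit x y /\ gcd_unit u v).
Proof.
  split.
  - intros (X & Y & Z & HC & HX & HY & HZ & HXY & _).
    destruct (inOI_halves X Z HX HZ) as (x & y & <- & Hz).
    destruct (inOI_halves Z Y HZ HY) as (u & v & <- & <-).
    exists x, y, u, v.
    refine (conj Hz (conj _ (conj HX (conj HZ (conj HY (conj _ (conj _ _))))))).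
    + apply (on_curve_iff x y u v Hz), HC.
    + apply inO_add_gdvd_mul, HZ.
    + apply gcd_unit_sum_diff; rewrite Hz; exact (on_curve_gcd_XZ _ _ _ HC HXY).
    + apply gcd_unit_sum_diff; exact (on_curve_gcd_ZY _ _ _ HC HXY).
  - intros (x & y & u & v & Hz & Hxy & HX & HZ & HY & _ & Hgxy & _).
    assert (HC : on_curve (gadd x y) (gsub u v) (gadd u v)) by (apply on_curve_iff; assumption).
    exists (gadd x y), (gsub u v), (gadd u v).
    refine (conj HC (conj HX (conj HY (conj HZ (conj _ _))))).
    + apply on_curve_gcd_XY; [rewrite Hz; exact HC | apply HX | exact Hgxy].
    + apply inO_neq0, inO_mul, inO_mul; [apply HX | apply HY | apply HZ].
Qed.
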